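(* Let $G_1$ and $G_2$ be directed graphs without self-loops on the common vertex set $[n]=\{1,\dots,n\}$. If $G_1$ and $G_2$ are distribution equivalent, i.e. $\mathcal{P}(G_1)=\mathcal{P}(G_2)$, then $G_1$ and $G_2$ have the same strongly connected components (the partitions of $[n]$ into strongly connected components of $G_1$ and of $G_2$ coincide).
   Context: For a directed graph $G$ on $[n]$ without self-loops, let $B_G\in\{0,1\}^{n\times n}$ be its adjacency matrix with $[B_G]_{ij}=1$ iff there is an edge $j\to i$. A linear structural causal model consistent with $G$ is $\mathbf{x}=W\mathbf{x}+\mathbf{e}$ where $W\in\mathbb{R}^{n\times n}$ has $\{(i,j):W_{ij}\neq 0\}=\{(i,j):[B_G]_{ij}=1\}$, $I-W$ is invertible, and the noise vector $\mathbf{e}$ has jointly independent components of which at most one is Gaussian. The distribution set $\mathcal{P}(G)$ is the set of all distributions of $\mathbf{x}=(I-W)^{-1}\mathbf{e}$ arising from all such $W$ and all such noise distributions. $G_1,G_2$ are distribution equivalent if $\mathcal{P}(G_1)=\mathcal{P}(G_2)$. Two vertices $u,v$ are strongly connected if there are directed paths from $u$ to $v$ and from $v$ to $u$; the equivalence classes of this relation are the strongly connected components. *)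

From HB Require Import structures.
From mathcomp Require Import all_boot all_order all_algebra.
From mathcomp Require Import all_classical all_reals all_analysis.
Set Implicit Arguments. Unset Strict Implicit. Unset Printing Implicit Defensive.
Import Order.TTheory GRing.Theory Num.Theory.
Local Open Scope classical_set_scope.
Local Open Scope ring_scope.

(* Directed graphs on [n] are relations on 'I_n : [G j i] means an edge j -> i.
   The adjacency matrix B_G has [B_G]_{ij} = 1 iff G j i. *)
Definition no_self_loops n (G : rel 'I_n) : Prop := forall i, ~~ G i i.

Definition consistent_with n (R : realType) (G : rel 'I_n) (W : 'M[R]_n) : Prop :=
  forall i j, (W i j != 0) = G j i.

Definition box_sets n (R : realType) : set (set 'rV[R]_n) :=
  [set A | exists B : 'I_n -> set R,
     (forall i, measurable (B i)) /\ A = [set v : 'rV[R]_n | forall i, B i (v ord0 i)]].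

Definition Rn_measurable n (R : realType) : set (set 'rV[R]_n) :=
  <<s @box_sets n R >>.

Definition law n (R : realType) d (T : measurableType d) (P : probability T R)
  (X : T -> 'rV[R]_n) : set 'rV[R]_n -> \bar R :=
  fun A => if pselect (Rn_measurable A) then P (X @^-1` A) else 0%E.

Definition jointly_independent n (R : realType) d (T : measurableType d)
  (P : probability T R) (e : 'I_n -> T -> R) : Prop :=
  forall B : 'I_n -> set R, (forall i, measurable (B i)) ->
    P (\bigcap_(i in [set: 'I_n]) (e i @^-1` B i)) =
    (\prod_(i < n) P (e i @^-1` B i))%E.

Definition is_gaussian (R : realType) d (T : measurableType d)
  (P : probability T R) (X : T -> R) : Prop :=
  exists (m s : R), 0 < s /\
    forall B : set R, measurable B -> P (X @^-1` B) = normal_prob m s B.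

(* The distribution set P(G) of linear SCMs x = W x + e consistent with G. *)
Definition distribution_set n (R : realType) (G : rel 'I_n)
  : set (set 'rV[R]_n -> \bar R) :=
  [set mu | exists (W : 'M[R]_n) (d : measure_display) (T : measurableType d)
       (P : probability T R) (e : 'I_n -> T -> R),
     [/\ consistent_with G W /\ (1%:M - W) \in unitmx,
         (forall i, measurable_fun setT (e i)),
         jointly_independent P e,
         (forall i j, is_gaussian P (e i) -> is_gaussian P (e j) -> i = j) &
         mu = law P (fun t => (\row_j e j t) *m (invmx (1%:M - W))^T)]].

Arguments distribution_set {n} R G.

Definition strongly_connected n (G : rel 'I_n) (u v : 'I_n) : bool :=
  connect G u v && connect G v u.

From HB Require Import structures.
From mathcomp Require Import all_boot all_order all_algebra.
From mathcomp Require Import all_classical all_reals all_analysis.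
Set Implicit Arguments. Unset Strict Implicit. Unset Printing Implicit Defensive.
Import Order.TTheory GRing.Theory Num.Theory.
Local Open Scope classical_set_scope.
Local Open Scope ring_scope.

(* Distribution equivalence already forces equal reachability.  Give G1 a model
   x = W1 x + e with independent fair-coin noise e (non-Gaussian, finitely
   supported) and suppose its law also arises from G2 with weights W2 and noise
   e'.  Multiplying a sample by (I - W2)^T recovers e', so the coordinates of
   t N, with t the coin vector and N = (I - W1)^-T (I - W2)^T, are pairwise
   independent.  For 0/1
   coins this forces each row of N to have at most one nonzero entry: otherwise
   pushing two coordinates to suitable extremes pins one coin to two different
   values on events of positive probability.  Hence every row k of I - W2 is a
   combination of rows i of I - W1 with s(i) = k; the nonzero diagonal of
   I - W2 makes s a permutation, and following supports turns each edge of G2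
   into a path of G1. *)

Lemma exists_pos_nonroot (R : numDomainType) (p : {poly R}) :
  p != 0 -> exists2 x : R, 0 < x & ~~ root p x.
Proof.
move=> p0; apply: contrapT => allroot.
pose xs := [seq k.+1%:R : R | k <- iota 0 (size p)].
have rootsP : all (root p) xs.
  apply/allP => _ /mapP [k _ ->]; apply: contrapT => /negP nr.
  by apply: allroot; exists k.+1%:R.
have xs_uniq : uniq xs.
  by rewrite map_inj_uniq ?iota_uniq // => a b /eqP; rewrite eqr_nat => /eqP [].
have := max_poly_roots p0 rootsP xs_uniq.
by rewrite size_map size_iota ltnn.
Qed.

Lemma unitmx_nonroot_char_poly (R : fieldType) n (B : 'M[R]_n) (x : R) :
  ~~ root (char_poly B) x -> (x%:M - B) \in unitmx.
Proof.
rewrite -eigenvalue_root_char => /eigenvalueP noeig.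
rewrite unitmxE unitfE; apply/negP => /det0P [v v0 vB]; apply: noeig.
by exists v => //; apply/eqP; rewrite -mul_mx_scalar eq_sym -subr_eq0 -mulmxBr vB.
Qed.

Lemma exists_consistent_unitmx (R : realType) n (G : rel 'I_n) :
  exists W : 'M[R]_n, consistent_with G W /\ (1%:M - W) \in unitmx.
Proof.
pose B : 'M[R]_n := \matrix_(i, j) (G j i)%:R.
have [x x_gt0 nroot] := exists_pos_nonroot (monic_neq0 (char_poly_monic B)).
have x0 : x != 0 by rewrite gt_eqF.
exists (x^-1 *: B); split.
  by move=> i j; rewrite !mxE; case: (G j i); rewrite ?mulr1 ?mulr0 ?invr_eq0 ?eqxx.
have -> : 1%:M - x^-1 *: B = x^-1 *: (x%:M - B).
  by rewrite scalerBr scale_scalar_mx mulVf.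
by rewrite unitmxZ ?unitfE ?invr_eq0 // unitmx_nonroot_char_poly.
Qed.

Lemma consistent_support (R : realType) n (G : rel 'I_n) (W : 'M[R]_n) :
  no_self_loops G -> consistent_with G W ->
  forall i j, ((1%:M - W) i j != 0) = (i == j) || G j i.
Proof.
move=> noloop cW i j; rewrite !mxE; have [<-|_] /= := eqVneq i j.
  have -> : W i i = 0 by apply/eqP; rewrite -[_ == 0]negbK cW (negbTE (noloop i)).
  by rewrite subr0 oner_eq0.
by rewrite sub0r oppr_eq0 cW.
Qed.

Lemma mulmx_row_support_lift (R : pzRingType) n (N A : 'M[R]_n) (s : 'I_n -> 'I_n) :
  (forall i k, N i k != 0 -> k = s i) ->
  forall k j, (N^T *m A) k j != 0 -> exists2 i, s i = k & A i j != 0.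
Proof.
move=> Ns k j NAkj; apply: contrapT => noi; move: NAkj; rewrite mxE big1 ?eqxx // => i _.
rewrite mxE; have [->|/Ns ki] := eqVneq (N i k) 0; first by rewrite mul0r.
have [->|Aij] := eqVneq (A i j) 0; first by rewrite mulr0.
by case: noi; exists i.
Qed.

Lemma connect_sub_lift (T : finType) (e1 e2 : rel T) (s : T -> T) :
  (forall k, e2 k k) ->
  (forall j k, e2 j k -> exists2 i, s i = k & connect e1 j i) ->
  subrel (connect e2) (connect e1).
Proof.
move=> e2_refl lift.
have /fin_all_exists [g gP] : forall k, exists i, s i = k /\ connect e1 k i.
  by move=> k; have [i] := lift k k (e2_refl k); exists i.
have g_inj : injective g.
  by apply: (@can_inj _ _ g s) => k; case: (gP k).
(* g is injective, so its orbits are cycles leading back from g k to k. *)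
have g_back k : connect e1 (g k) k.
  have gk_k : fconnect g (g k) k by rewrite fconnect_sym //; exact: fconnect1.
  apply: connect_sub gk_k => x _ /eqP <-; exact: (gP x).2.
apply: connect_sub => j k /lift [i <-].
have /codomP [k' ->] := injF_onto g_inj i.
by rewrite (gP k').1 => /connect_trans; apply; exact: g_back.
Qed.

Lemma connect_sub_mixing (R : realType) n (G1 G2 : rel 'I_n) (W1 W2 N : 'M[R]_n) :
  no_self_loops G1 -> no_self_loops G2 ->
  consistent_with G1 W1 -> consistent_with G2 W2 ->
  (forall i k l, N i k != 0 -> N i l != 0 -> k = l) ->
  N^T *m (1%:M - W1) = 1%:M - W2 ->
  subrel (connect G2) (connect G1).
Proof.
move=> noloop1 noloop2 cW1 cW2 Nrow NW1.
pose s i := odflt i [pick k | N i k != 0].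
have Ns i k : N i k != 0 -> k = s i.
  move=> Nik; rewrite /s; case: pickP => [k' /(Nrow i k k' Nik) // | /(_ k)].
  by rewrite Nik.
pose e2 := [rel j k | (1%:M - W2) k j != 0].
have G2e2 : subrel (connect G2) (connect e2).
  apply: connect_sub => j k G2jk; apply: connect1.
  by rewrite /= (consistent_support noloop2 cW2) G2jk orbT.
move=> u v /G2e2; apply: (connect_sub_lift (s := s)) => [k|j k] /=.
  by rewrite (consistent_support noloop2 cW2) eqxx.
rewrite -NW1 => /(mulmx_row_support_lift Ns) [i sik].
rewrite (consistent_support noloop1 cW1) => /predU1P [<- | G1ji]; exists i => //.
exact: connect1.
Qed.

Lemma probability_setI_full (R : realType) d (T : measurableType d)
    (P : probability T R) (A B : set T) :
  measurable A -> measurable B -> P B = 1%E -> P (A `&` B) = P A.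
Proof.
move=> mA mB PB1.
have mAnB : measurable (A `&` ~` B) by apply: measurableI => //; exact: measurableC.
have PnB0 : P (A `&` ~` B) = 0%E.
  apply/eqP; rewrite eq_le measure_ge0 andbT.
  have <- : P (~` B) = 0%E by rewrite probability_setC // PB1 subee.
  by apply: le_measure; rewrite ?inE //; exact: measurableC.
transitivity (P ((A `&` B) `|` (A `&` ~` B))).
  by rewrite measureU0 //; exact: measurableI.
by rewrite -setIUr setUCr setIT.
Qed.

Lemma preimage_finite_measurable d (T : measurableType d) (U : Type)
    (X : T -> U) (S : set U) :
  (forall v, measurable (X @^-1` [set v])) -> finite_set S ->
  measurable (X @^-1` S).
Proof.
move=> mX finS; rewrite -[S]image_id -bigcup_imset1 preimage_bigcup.
by apply: fin_bigcup_measurable.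
Qed.

Section law_transfer.
Variables (R : realType) (n : nat).

Lemma Rn_measurable_finite (S : set 'rV[R]_n) : finite_set S -> Rn_measurable S.
Proof.
have box1 (v : 'rV[R]_n) : box_sets [set v].
  exists (fun i => [set v ord0 i]); split => [i|]; first exact: measurable_set1.
  by apply/seteqP; split => [w -> //|w wv]; apply/rowP => i; exact: wv.
move=> /finite_seqP [s ->]; elim: s => [|v s IH].
  by rewrite set_nil; exact: sigma_algebra0.
have -> : [set` v :: s] = [set v] `|` [set` s].
  apply/seteqP; split => w /=; rewrite in_cons.
    by case/orP => [/eqP|]; [left|right].
  by case=> [->|->]; rewrite ?eqxx ?orbT.
rewrite -bigcup2E; apply: sigma_algebra_bigcup => -[|[|k]] //=.
- by apply: sub_sigma_algebra; exact: box1.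
- exact: sigma_algebra0.
Qed.

Lemma law_measurableE d (T : measurableType d) (P : probability T R)
    (X : T -> 'rV[R]_n) (S : set 'rV[R]_n) :
  Rn_measurable S -> law P X S = P (X @^-1` S).
Proof. by rewrite /law; case: pselect. Qed.

(* [law] only sees [Rn_measurable] sets, but both laws live on the finite, hence
   measurable, set [range X1]. *)
Lemma law_eq_preimage d1 d2 (T1 : measurableType d1) (T2 : measurableType d2)
    (P1 : probability T1 R) (P2 : probability T2 R)
    (X1 : T1 -> 'rV[R]_n) (X2 : T2 -> 'rV[R]_n) :
  finite_set (range X1) -> (forall v, measurable (X2 @^-1` [set v])) ->
  law P1 X1 = law P2 X2 ->
  forall A, measurable (X2 @^-1` A) -> P2 (X2 @^-1` A) = P1 (X1 @^-1` A).
Proof.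
move=> finX1 mX2 lawE A mA; set F := range X1.
have law_sub S : S `<=` F -> P2 (X2 @^-1` S) = P1 (X1 @^-1` S).
  move=> /sub_finite_set /(_ finX1) /Rn_measurable_finite mS.
  by rewrite -!law_measurableE // lawE.
have X1F : X1 @^-1` F = setT by apply/seteqP; split => // t _; exists t.
have P2F : P2 (X2 @^-1` F) = 1%E by rewrite law_sub // X1F probability_setT.
have mF : measurable (X2 @^-1` F) by exact: preimage_finite_measurable.
rewrite -(probability_setI_full mA mF P2F) -preimage_setI law_sub; last exact: subIsetr.
by rewrite preimage_setI X1F setIT.
Qed.

End law_transfer.

Lemma jointly_independent_pair (R : realType) n d (T : measurableType d)
    (P : probability T R) (e : 'I_n -> T -> R) (k l : 'I_n) (A B : set R) :
  jointly_independent P e -> k != l -> measurable A -> measurable B ->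
  P (e k @^-1` A `&` e l @^-1` B) = (P (e k @^-1` A) * P (e l @^-1` B))%E.
Proof.
move=> ind kl mA mB.
pose C i := if i == k then A else if i == l then B else setT.
have mC i : measurable (C i) by rewrite /C; case: ifP => _; [|case: ifP].
have Ck : C k = A by rewrite /C eqxx.
have Cl : C l = B by rewrite /C eq_sym (negbTE kl) eqxx.
have -> : e k @^-1` A `&` e l @^-1` B = \bigcap_(i in [set: 'I_n]) e i @^-1` C i.
  apply/seteqP; split => [t [At Bt] i _|t Ct]; last by rewrite -Ck -Cl; split; exact: Ct.
  by rewrite /C; case: eqP => [->|_] //; case: eqP => [->|_].
rewrite ind // (bigD1 k) //= (bigD1 l) 1?eq_sym //= Ck Cl.
rewrite [X in (_ * (_ * X))%E]big1 ?mule1 // => i /andP [ik il].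
by rewrite /C (negbTE ik) (negbTE il) preimage_setT probability_setT.
Qed.

Section scm_sample.
Variables (R : realType) (n : nat) (W : 'M[R]_n).
Hypothesis unitW : (1%:M - W) \in unitmx.

Definition scm_sample (T : Type) (e : 'I_n -> T -> R) (t : T) : 'rV[R]_n :=
  (\row_j e j t) *m (invmx (1%:M - W))^T.

Lemma scm_sampleK T (e : 'I_n -> T -> R) t :
  scm_sample e t *m (1%:M - W)^T = \row_j e j t.
Proof. by rewrite /scm_sample -mulmxA -trmx_mul mulmxV // trmx1 mulmx1. Qed.

Lemma scm_sample_preimage (T : Type) (e : 'I_n -> T -> R) (S : set 'rV[R]_n) :
  scm_sample e @^-1` [set v | S (v *m (1%:M - W)^T)] = [set t | S (\row_j e j t)].
Proof. by apply/seteqP; split => t; rewrite /= scm_sampleK. Qed.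

Lemma scm_sample_preimage1_measurable d (T : measurableType d) (e : 'I_n -> T -> R) :
  (forall i, measurable_fun setT (e i)) ->
  forall v, measurable (scm_sample e @^-1` [set v]).
Proof.
move=> me v.
have -> : scm_sample e @^-1` [set v] =
    \bigcap_(j in [set: 'I_n]) e j @^-1` [set (v *m (1%:M - W)^T) ord0 j].
  apply/seteqP; split => [t /= <- j _|t /= tv]; first by rewrite scm_sampleK mxE.
  rewrite /scm_sample (_ : \row_j e j t = v *m (1%:M - W)^T).
    by rewrite -mulmxA -trmx_mul mulVmx // trmx1 mulmx1.
  by apply/rowP => j; rewrite mxE; exact: tv.
apply: fin_bigcap_measurable => // j _.
by rewrite -[X in measurable X]setTI; apply: me => //; exact: measurable_set1.
Qed.

End scm_sample.

Lemma law_scm_noise_pair_indep (R : realType) n d1 d2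
    (T1 : measurableType d1) (T2 : measurableType d2)
    (P1 : probability T1 R) (P2 : probability T2 R) (X : T1 -> 'rV[R]_n)
    (W : 'M[R]_n) (e : 'I_n -> T2 -> R) :
  finite_set (range X) -> (1%:M - W) \in unitmx ->
  (forall i, measurable_fun setT (e i)) -> jointly_independent P2 e ->
  law P1 X = law P2 (scm_sample W e) ->
  forall (k l : 'I_n) (a b : R), k != l ->
  P1 [set t | (X t *m (1%:M - W)^T) ord0 k = a /\ (X t *m (1%:M - W)^T) ord0 l = b] =
  (P1 [set t | (X t *m (1%:M - W)^T) ord0 k = a] *
   P1 [set t | (X t *m (1%:M - W)^T) ord0 l = b])%E.
Proof.
move=> finX unitW me ind lawE k l a b kl.
have me1 j c : measurable (e j @^-1` [set c]).
  by rewrite -[X in measurable X]setTI; apply: me => //; exact: measurable_set1.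
have noise S : measurable [set t | S (\row_j e j t)] ->
    P1 (X @^-1` [set v | S (v *m (1%:M - W)^T)]) = P2 [set t | S (\row_j e j t)].
  move=> mS; rewrite -(scm_sample_preimage unitW).
  apply/esym/law_eq_preimage; rewrite ?scm_sample_preimage //.
  exact: scm_sample_preimage1_measurable.
have row_event j c : [set t | (\row_i e i t) ord0 j = c] = e j @^-1` [set c].
  by apply/seteqP; split => t; rewrite /= mxE.
have row_event2 : [set t | (\row_i e i t) ord0 k = a /\ (\row_i e i t) ord0 l = b] =
    e k @^-1` [set a] `&` e l @^-1` [set b].
  by apply/seteqP; split => t; rewrite /= !mxE.
rewrite (noise (fun u => u ord0 k = a /\ u ord0 l = b)) ?row_event2; last first.
  by apply: measurableI; exact: me1.
rewrite (noise (fun u => u ord0 k = a)) ?row_event; last exact: me1.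
rewrite (noise (fun u => u ord0 l = b)) ?row_event; last exact: me1.
by rewrite jointly_independent_pair //; exact: measurable_set1.
Qed.

Definition coins n := {ffun 'I_n -> bool}.
HB.instance Definition _ n := Finite.on (coins n).
HB.instance Definition _ n := isPointed.Build (coins n) [ffun=> false].
HB.instance Definition _ n := @isMeasurable.Build default_measure_display
  (coins n) discrete_measurable discrete_measurable0
  discrete_measurableC discrete_measurableU.

Section coin_prob.
Variables (R : realType) (n : nat).

Definition coin_prob : set (coins n) -> \bar R :=
  mscale ((2^-1 : R) ^+ n)%:nng
    (msum (fun k => \d_(nth point (enum (coins n)) k)) #|coins n|).

HB.instance Definition _ := Measure.on coin_prob.

Lemma coin_probE (A : set (coins n)) :
  coin_prob A = ((2^-1) ^+ n * \sum_(t : coins n) \1_A t)%:E.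
Proof.
rewrite /coin_prob /mscale /= /msum /= EFinM -sumEFin; congr (_ * _)%E.
rewrite cardE -(big_mkord xpredT (fun k => \d_(nth point (enum (coins n)) k) A)).
rewrite -(big_nth point xpredT (fun t : coins n => \d_t A)) big_enum /=.
by apply: eq_bigr => t _; rewrite diracE indicE.
Qed.

Lemma coin_prob_setT : coin_prob setT = 1%E.
Proof.
rewrite coin_probE; under eq_bigr do rewrite indicE in_setT.
rewrite sumr_const card_ffun card_bool card_ord -mulr_natr natrX -exprMn.
by rewrite mul1r mulVf ?expr1n.
Qed.

HB.instance Definition _ :=
  @Measure_isProbability.Build _ _ R coin_prob coin_prob_setT.

Lemma coin_prob_gt0 (A : set (coins n)) t : A t -> (0 < coin_prob A)%E.
Proof.
move=> At; rewrite coin_probE lte_fin mulr_gt0 ?exprn_gt0 ?invr_gt0 ?ltr0n //.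
by rewrite (bigD1 t) //= indicE mem_set // ltr_pwDl // sumr_ge0.
Qed.

Lemma coin_prob_cylinder (C : 'I_n -> set bool) :
  coin_prob [set t | forall i, C i (t i)] =
  (\prod_(i < n) (2^-1 * \sum_(b : bool) \1_(C i) b))%:E.
Proof.
rewrite coin_probE big_split /= prodr_const card_ord bigA_distr_bigA /=.
congr (_ * _)%:E; apply: eq_bigr => t _.
rewrite indicE; have [Ct | notCt] := pselect (forall i, C i (t i)).
  by rewrite mem_set // big1 // => i _; rewrite indicE mem_set.
have [i notCi] := (existsNP _).2 notCt.
by rewrite memNset // (bigD1 i) //= indicE memNset // mul0r.
Qed.

Definition coin (i : 'I_n) (t : coins n) : R := (t i)%:R.

Lemma coin_prob_marginal i (B : set R) :
  coin_prob (coin i @^-1` B) = (2^-1 * \sum_(b : bool) \1_B (b%:R : R))%:E.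
Proof.
pose C j : set bool := if j == i then [set b : bool | B b%:R] else setT.
have -> : coin i @^-1` B = [set t | forall j, C j (t j)].
  apply/seteqP; split => t /=; first by move=> Bt j; rewrite /C; case: eqP => // ->.
  by move/(_ i); rewrite /C eqxx.
rewrite coin_prob_cylinder (bigD1 i) //= [X in _ * X]big1 ?mulr1 => [|j ji].
  by rewrite /C eqxx; congr (_ * _)%:E; apply: eq_bigr => b _; rewrite !indicE.
by rewrite /C (negbTE ji) big_bool /= !indicE !in_setT mulVf ?pnatr_eq0.
Qed.

Lemma coin_indep : jointly_independent coin_prob coin.
Proof.
move=> B _.
transitivity (coin_prob [set t | forall i, [set b : bool | B i b%:R] (t i)]).
  by congr coin_prob; apply/seteqP; split => t /= Bt i => [|_]; exact: Bt.
rewrite (coin_prob_cylinder (fun i => [set b : bool | B i b%:R])) -prodEFin.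
by apply: eq_bigr => i _; exact/esym/coin_prob_marginal.
Qed.

Lemma coin_not_gaussian i : ~ is_gaussian coin_prob (coin i).
Proof.
move=> [m [s [s_gt0 lawN]]].
have null0 : (@lebesgue_measure R).-null_set [set 0].
  by apply/measure0_null_setP; [exact: measurable_set1 | exact: lebesgue_measure_set1].
have : (0 < coin_prob (coin i @^-1` [set 0%R]))%E.
  by apply: (@coin_prob_gt0 _ point); rewrite /coin /= ffunE.
rewrite lawN; last exact: measurable_set1.
by rewrite (normal_prob_dominates m s null0 (measurable_set1 0)) // lte_fin ltxx.
Qed.

Lemma coin_prob_indep_meet (A B : set (coins n)) ta tb :
  coin_prob (A `&` B) = (coin_prob A * coin_prob B)%E -> A ta -> B tb ->
  exists t, A t /\ B t.
Proof.
move=> indAB Ata Btb; apply: contrapT => disjAB.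
have AB0 : A `&` B = set0 by apply/seteqP; split => // t [At Bt]; apply: disjAB; exists t.
move: indAB; rewrite AB0 measure0 => /esym/eqP.
by rewrite gt_eqF // mule_gt0 //; [exact: coin_prob_gt0 Ata | exact: coin_prob_gt0 Btb].
Qed.

Definition coin_argmax (c : 'I_n -> R) : coins n := [ffun j => 0 < c j].

Lemma coin_argmax_eq (c : 'I_n -> R) (t : coins n) :
  \sum_j (t j)%:R * c j = \sum_j (coin_argmax c j)%:R * c j ->
  forall j, c j != 0 -> t j = (0 < c j).
Proof.
have term_le (u : coins n) j : (u j)%:R * c j <= (coin_argmax c j)%:R * c j.
  by rewrite ffunE; case: (u j); case: ltP => h /=; rewrite ?mul1r ?mul0r // ltW.
move=> tmax j cj0; apply/eqP; apply: contraT => tj.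
suff : \sum_j (t j)%:R * c j < \sum_j (coin_argmax c j)%:R * c j by rewrite tmax ltxx.
rewrite (bigD1 j) //= [ltRHS](bigD1 j) //=.
apply: ltr_leD; last by apply: ler_sum => i _; exact: term_le.
move: tj; rewrite ffunE; case: (t j); case: ltP => h //= _;
  by rewrite ?mul1r ?mul0r // lt_neqAle cj0.
Qed.

Lemma coin_pair_indep_row_support (N : 'M[R]_n) (Y : coins n -> 'rV[R]_n) :
  (forall t, Y t = (\row_j coin j t) *m N) ->
  (forall (k l : 'I_n) (a b : R), k != l ->
    coin_prob [set t | Y t ord0 k = a /\ Y t ord0 l = b] =
    (coin_prob [set t | Y t ord0 k = a] * coin_prob [set t | Y t ord0 l = b])%E) ->
  forall i k l, N i k != 0 -> N i l != 0 -> k = l.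
Proof.
move=> YE ind i k l Nik Nil; apply/eqP; apply: contraT => kl.
have Ydot t m : Y t ord0 m = \sum_j (t j)%:R * N j m.
  by rewrite YE mxE; apply: eq_bigr => j _; rewrite mxE.
pose sg : R := if (0 < N i k) == (0 < N i l) then -1 else 1.
have sg2 : sg * sg = 1 by rewrite /sg; case: ifP; rewrite ?mulrNN mulr1.
have sg_sign : (0 < sg * N i l) != (0 < N i k).
  rewrite /sg; case: ifP => [/eqP ->|/negbT]; last by rewrite mul1r eq_sym.
  by rewrite mulN1r oppr_gt0; case: ltrgt0P Nil.
(* Column k's form attains its maximum only where t i = (0 < N i k); the sign sg
   makes the maximum of column l's form force the opposite value of t i. *)
pose ck j := N j k; pose cl j := sg * N j l.
have cl_dot (u : coins n) : \sum_j (u j)%:R * cl j = sg * \sum_j (u j)%:R * N j l.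
  by rewrite mulr_sumr; apply: eq_bigr => j _; rewrite mulrCA.
pose mk := \sum_j (coin_argmax ck j)%:R * ck j.
pose ml := \sum_j (coin_argmax cl j)%:R * cl j.
have [t [/= Atk Btl]] : exists t, Y t ord0 k = mk /\ Y t ord0 l = sg * ml.
  apply: (coin_prob_indep_meet (ind k l mk (sg * ml) kl)) => /=; first exact: Ydot.
  by rewrite Ydot /ml cl_dot mulrA sg2 mul1r.
have tik : t i = (0 < N i k).
  by apply: (coin_argmax_eq (c := ck)) => //; rewrite -Ydot.
have til : t i = (0 < sg * N i l).
  apply: (coin_argmax_eq (c := cl)).
    by rewrite cl_dot -Ydot Btl mulrA sg2 mul1r.
  by rewrite mulf_eq0 negb_or Nil /sg andbT; case: ifP.
by move: sg_sign; rewrite -tik -til eqxx.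
Qed.

End coin_prob.

Lemma coin_law_in_distribution_set (R : realType) n (G : rel 'I_n) (W : 'M[R]_n) :
  consistent_with G W -> (1%:M - W) \in unitmx ->
  distribution_set R G (law (@coin_prob R n) (scm_sample W (@coin R n))).
Proof.
move=> cW unitW.
exists W, default_measure_display, (coins n), (@coin_prob R n), (@coin R n).
by split => //; [exact: coin_indep | move=> i j /coin_not_gaussian].
Qed.

Lemma coin_scm_mixing_row_support (R : realType) n (W1 W2 : 'M[R]_n)
    d (T : measurableType d) (P : probability T R) (e : 'I_n -> T -> R) :
  (1%:M - W2) \in unitmx -> (forall i, measurable_fun setT (e i)) ->
  jointly_independent P e ->
  law (@coin_prob R n) (scm_sample W1 (@coin R n)) = law P (scm_sample W2 e) ->
  let N := (invmx (1%:M - W1))^T *m (1%:M - W2)^T in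
  forall i k l, N i k != 0 -> N i l != 0 -> k = l.
Proof.
move=> unitW2 me ind lawE N.
have finX : finite_set (range (scm_sample W1 (@coin R n))).
  by apply: finite_image; exact: finite_finset.
pose Y t := scm_sample W1 (@coin R n) t *m (1%:M - W2)^T.
apply: (coin_pair_indep_row_support (Y := Y)).
  by move=> t; rewrite /Y /scm_sample -mulmxA.
exact: (law_scm_noise_pair_indep finX unitW2 me ind lawE).
Qed.

Lemma distribution_set_sub_connect (R : realType) n (G1 G2 : rel 'I_n) :
  no_self_loops G1 -> no_self_loops G2 ->
  distribution_set R G1 `<=` distribution_set R G2 ->
  subrel (connect G2) (connect G1).
Proof.
move=> noloop1 noloop2 sub12.
have [W1 [cW1 unitW1]] := exists_consistent_unitmx R G1.
have [W2 [d [T [P [e [[cW2 unitW2] me ind _ lawE]]]]]] :=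
  sub12 _ (coin_law_in_distribution_set cW1 unitW1).
apply: (connect_sub_mixing noloop1 noloop2 cW1 cW2).
  exact: (coin_scm_mixing_row_support unitW2 me ind lawE).
by rewrite trmx_mul !trmxK -mulmxA mulVmx // mulmx1.
Qed.

Theorem theorem1 (R : realType) (n : nat) (G1 G2 : rel 'I_n) :
  no_self_loops G1 -> no_self_loops G2 ->
  distribution_set R G1 = distribution_set R G2 ->
  forall u v : 'I_n, strongly_connected G1 u v = strongly_connected G2 u v.
Proof.
move=> noloop1 noloop2 PG12.
have connectE x y : connect G1 x y = connect G2 x y.
  by apply/idP/idP; apply: (@distribution_set_sub_connect R) => //; rewrite PG12.
by move=> u v; rewrite /strongly_connected !connectE.
Qed.
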